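(* Let $p\in[1,\infty]$ and $d\in\mathbb N$. For $n\in\mathbb N$ let $s_n\in\mathbb N$ and let $\mathbf w^{(n)}=(\mathbf w^{(n)}_0,\dots,\mathbf w^{(n)}_{s_n})\in\mathbb R^{s_n+1}$ be filter masks, let $m_0:=d$, $m_n:=m_{n-1}+s_n$, and let $\mathbf b_n\in\mathbb R^{m_n}$ be bias vectors. Suppose $\sum_{n=1}^\infty\|\mathbf b_n\|_p<\infty$, $\mathbf w^{(n)}_0=1$ for all $n\in\mathbb N$, and $\sum_{n=1}^\infty\sum_{j=1}^{s_n}|\mathbf w^{(n)}_j|<\infty$. Then the deep ReLU convolutional neural networks $x^{(n)}$ converge pointwise on $[0,1]^d$, i.e. for each $x\in[0,1]^d$ the sequence $\tilde x^{(n)}$ converges in $\ell^p$.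
   Context: $\sigma(t)=\max(t,0)$ applied componentwise. For $\mathbf x\in\mathbb R^m$ and $\mathbf w=(\mathbf w_0,\dots,\mathbf w_s)$, the convolution $\mathbf x*\mathbf w\in\mathbb R^{m+s}$ has entries $(\mathbf x*\mathbf w)_i=\sum_{j=\max(0,i-m)}^{\min(i-1,s)}\mathbf w_j\mathbf x_{i-j}$, $1\le i\le m+s$; equivalently $\mathbf x*\mathbf w=\mathbf W\mathbf x$ with $\mathbf W\in\mathbb R^{(m+s)\times m}$, $\mathbf W_{jk}=\mathbf w_{j-k}$ if $0\le j-k\le s$ and $0$ otherwise. The CNN is defined by $x^{(0)}:=x\in[0,1]^d$ and $x^{(n)}:=\sigma(x^{(n-1)}*\mathbf w^{(n)}+\mathbf b_n)\in\mathbb R^{m_n}$; $\tilde x^{(n)}\in\ell^p$ denotes $x^{(n)}$ extended by zeros beyond its first $m_n$ entries. *)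

From HB Require Import structures.
From mathcomp Require Import all_boot all_order all_algebra.
From mathcomp Require Import all_classical all_reals all_analysis.
Set Implicit Arguments. Unset Strict Implicit. Unset Printing Implicit Defensive.
Import Order.TTheory GRing.Theory Num.Theory.
Local Open Scope ring_scope.

(* Conventions: real vectors of R^m are functions 'I_m -> R (0-based indices:
   paper's index i in 1..m is our index i-1).  Sequences in l^p are nat -> R. *)

Section CNN.
Variable R : realType.

Definition relu (t : R) : R := Num.max t 0.

Definition zext (m : nat) (v : 'I_m -> R) : nat -> R :=
  fun i => match ltnP i m with
           | LtnNotGeq h => v (Ordinal h)
           | _ => 0
           end.

Definition lpnorm (p : \bar R) (y : nat -> R) : \bar R :=
  match p with
  | +oo%E => ereal_sup (range (fun i => (`|y i|)%:E))
  | r%:E => poweR (\sum_(i <oo) ((`|y i| `^ r)%:E))%E r^-1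
  | -oo%E => 0%E
  end.

Fixpoint width (d : nat) (s : nat -> nat) (n : nat) : nat :=
  if n is n'.+1 then (width d s n' + s n)%N else d.

(* convolution x * w in R^(m+s) of x in R^m (given by its zero extension
   x : nat -> R) with the mask w = (w_0,...,w_s), returned zero-extended:
   (x*w)_i = sum_{j = max(0, i-(m-1))}^{min(i, s)} w_j x_{i-j}, 0 <= i < m+s *)
Definition conv (m s : nat) (w : 'I_s.+1 -> R) (x : nat -> R) : nat -> R :=
  fun i => if (i < m + s)%N then
             \sum_(j < s.+1 | (j <= i)%N && (i - j < m)%N) w j * x (i - j)%N
           else 0.

(* the CNN layers, zero-extended: cnn n = \tilde x^{(n)} *)
Fixpoint cnn (d : nat) (s : nat -> nat) (w : forall n, 'I_(s n).+1 -> R)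
    (b : forall n, 'I_(width d s n) -> R) (x : 'I_d -> R) (n : nat) : nat -> R :=
  match n with
  | 0 => zext x
  | n'.+1 => fun i =>
      if (i < width d s n'.+1)%N then
        relu (conv (width d s n') (w n'.+1) (cnn w b x n') i + zext (b n'.+1) i)
      else 0
  end.

End CNN.

(* Every layer is nonnegative, and the ReLU is 1-Lipschitz and fixes
   nonnegative numbers, so x^(n+1) - x^(n) is dominated by
   (x^(n) * w^(n+1) - x^(n)) + b_(n+1).  As w_0 = 1, the first term is a
   combination of shifts of x^(n) with weights w_j, j >= 1, so
     |x^(n+1) - x^(n)|_p <= a_(n+1) |x^(n)|_p + |b_(n+1)|_p,
   a_n := sum_(j >= 1) |w^(n)_j|.  A discrete Gronwall inequality bounds the
   norms |x^(n)|_p by some M, hence the increments are dominated by the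
   summable sequence a_(n+1) M + |b_(n+1)|_p.  The sequence is then Cauchy in
   l^p; its coordinatewise limit is its l^p limit by a Fatou argument on
   finite truncations. *)

From Pilot Require Import Defs.
From HB Require Import structures.
From mathcomp Require Import all_boot all_order all_algebra.
From mathcomp Require Import all_classical all_reals all_analysis.
From mathcomp Require Import lra ring zify.
Import Order.TTheory GRing.Theory Num.Theory.
Import numFieldNormedType.Exports.
Local Open Scope classical_set_scope.
Local Open Scope ring_scope.

Section lp_sequences.
Context {R : realType}.
Implicit Types (f g : nat -> R).
Local Open Scope ereal_scope.

Definition shiftf (j : nat) f : nat -> R :=
  fun i => if (j <= i)%N then f (i - j)%N else 0%R.

Definition truncf (k : nat) f : nat -> R :=
  fun i => if (i < k)%N then f i else 0%R.

Section finite_exponent.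
Variable r : R.
Hypothesis r_ge1 : (1 <= r)%R.

Let r_gt0 : (0 < r)%R. Proof. exact: lt_le_trans r_ge1. Qed.

Let powRK (x : R) : (0 <= x)%R -> ((x `^ r) `^ r^-1)%R = x.
Proof. by move=> x0; rewrite -powRrM mulfV ?gt_eqF // powRr1. Qed.

Let poweRK (x : \bar R) : 0 <= x -> (x `^ r^-1) `^ r = x.
Proof. by move=> x0; rewrite -poweRrM mulVf ?gt_eqF // poweRe1. Qed.

Let sum_powR_ge0 f : 0 <= \sum_(i <oo) (`|f i| `^ r)%:E.
Proof. by apply: nneseries_ge0 => i _ _; rewrite lee_fin powR_ge0. Qed.

Let le_poweR_inv (x y : \bar R) : 0 <= x -> x <= y -> x `^ r^-1 <= y `^ r^-1.
Proof.
move=> x0 xy; apply: gt0_ler_poweR => //; first by rewrite invr_ge0 ltW.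
- by rewrite in_itv /= x0 leey.
- by rewrite in_itv /= (le_trans x0 xy) leey.
Qed.

Lemma lpnormr_ge_norm f i : (`|f i|)%:E <= lpnorm r%:E f.
Proof.
rewrite /= -[X in X%:E <= _](@powRK _ (normr_ge0 (f i))) -poweR_EFin.
apply: le_poweR_inv; first by rewrite lee_fin powR_ge0.
rewrite (@nneseriesD1 _ (fun k => (`|f k| `^ r)%:E) i xpredT) //.
by apply: leeDl; apply: nneseries_ge0.
Qed.

Lemma le_lpnormr f g : (forall i, `|f i| <= `|g i|)%R ->
  lpnorm r%:E f <= lpnorm r%:E g.
Proof.
move=> fg; apply: le_poweR_inv; first exact: sum_powR_ge0.
apply: lee_nneseries => [i _ _|i _]; first by rewrite lee_fin powR_ge0.
by rewrite lee_fin ge0_ler_powR ?nnegrE ?(ltW r_gt0).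
Qed.

Let lpnormr_Lnorm f : lpnorm r%:E f = Lnorm (@counting nat R) r%:E (EFin \o f).
Proof. by rewrite Lnorm_counting. Qed.

Lemma lpnormrD f g : lpnorm r%:E (f \+ g)%R <= lpnorm r%:E f + lpnorm r%:E g.
Proof. by rewrite !lpnormr_Lnorm; apply: eminkowski; rewrite ?lee_fin. Qed.

Lemma lpnormrZ c f :
  lpnorm r%:E (fun i => c * f i)%R = (`|c|)%:E * lpnorm r%:E f.
Proof.
rewrite /=; under eq_eseriesr => i _ do rewrite normrM powRM // EFinM.
rewrite nneseriesZl; last by move=> i _; rewrite lee_fin powR_ge0.
by rewrite poweRM ?lee_fin ?powR_ge0 ?sum_powR_ge0 // poweR_EFin powRK.
Qed.

Lemma lpnormr_shift j f : lpnorm r%:E (shiftf j f) = lpnorm r%:E f.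
Proof.
rewrite /=; congr poweR.
rewrite (nneseries_split 0 j); last by move=> i _; rewrite lee_fin powR_ge0.
rewrite add0n big1_seq ?add0e; last first.
  move=> i /andP[_]; rewrite mem_index_iota => /andP[_ ij].
  by rewrite /shiftf leqNgt ij /= normr0 powR0 ?gt_eqF.
rewrite -nneseries_addn; last by move=> i; rewrite lee_fin powR_ge0.
by apply: eq_eseriesr => i _; rewrite /shiftf leq_addl addnK.
Qed.

Let sum_powR_trunc f k : \sum_(i <oo) (`|truncf k f i| `^ r)%:E =
  \sum_(0 <= i < k) (`|f i| `^ r)%:E.
Proof.
rewrite (nneseries_split 0 k); last by move=> i _; rewrite lee_fin powR_ge0.
rewrite add0n eseries0 ?adde0; last first.
  by move=> i ki _; rewrite /truncf ltnNge ki /= normr0 powR0 ?gt_eqF.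
by apply: eq_big_nat => i /andP[_ ik]; rewrite /truncf ik.
Qed.

Lemma lpnormr_le_truncf f (C : R) :
  (forall k, lpnorm r%:E (truncf k f) <= C%:E) -> lpnorm r%:E f <= C%:E.
Proof.
move=> fC; have C0 : (0 <= C)%R.
  by rewrite -lee_fin (le_trans _ (fC 0%N)) //= poweR_ge0.
rewrite -[C](@powRK _ C0) -poweR_EFin; apply: le_poweR_inv => //.
apply: lime_le; first by apply: is_cvg_nneseries => i _; rewrite lee_fin powR_ge0.
apply: nearW => k; have := fC k; rewrite /= sum_powR_trunc => truncC.
have sum_ge0 : 0 <= \sum_(0 <= i < k) (`|f i| `^ r)%:E.
  by apply: sume_ge0 => i _; rewrite lee_fin powR_ge0.
rewrite -(@poweRK _ sum_ge0) -poweR_EFin; apply: gt0_ler_poweR => //.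
- by rewrite ltW.
- by rewrite in_itv /= poweR_ge0 leey.
- by rewrite in_itv /= lee_fin C0 leey.
Qed.

Lemma lpnormr_truncf_lty f k : lpnorm r%:E (truncf k f) < +oo.
Proof. by rewrite /= sum_powR_trunc; apply: poweR_lty; rewrite sumEFin ltry. Qed.

End finite_exponent.

Section infinite_exponent.

Lemma lpnormy_ge_norm f i : (`|f i|)%:E <= lpnorm +oo f.
Proof. by apply: ereal_sup_ubound; exists i. Qed.

Let lpnormy_ge0 f : 0 <= lpnorm +oo f.
Proof. exact: le_trans (lpnormy_ge_norm f 0). Qed.

Lemma le_lpnormy f g : (forall i, `|f i| <= `|g i|)%R ->
  lpnorm +oo f <= lpnorm +oo g.
Proof.
move=> fg; apply: ge_ereal_sup => _ [i _ <-].
by apply: le_trans (lpnormy_ge_norm g i); rewrite lee_fin.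
Qed.

Lemma lpnormyD f g : lpnorm +oo (f \+ g)%R <= lpnorm +oo f + lpnorm +oo g.
Proof.
apply: ge_ereal_sup => _ [i _ <-].
apply: le_trans (leeD (lpnormy_ge_norm f i) (lpnormy_ge_norm g i)).
by rewrite -EFinD lee_fin ler_normD.
Qed.

Lemma lpnormyZ c f :
  lpnorm +oo (fun i => c * f i)%R <= (`|c|)%:E * lpnorm +oo f.
Proof.
apply: ge_ereal_sup => _ [i _ <-].
by rewrite normrM EFinM; apply: lee_wpmul2l; rewrite ?lee_fin ?lpnormy_ge_norm.
Qed.

Lemma lpnormy_shift j f : lpnorm +oo (shiftf j f) <= lpnorm +oo f.
Proof.
apply: ge_ereal_sup => _ [i _ <-]; rewrite /shiftf.
by case: ifP => _; [exact: lpnormy_ge_norm | rewrite normr0 lpnormy_ge0].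
Qed.

Lemma lpnormy_le_truncf f (C : R) :
  (forall k, lpnorm +oo (truncf k f) <= C%:E) -> lpnorm +oo f <= C%:E.
Proof.
move=> fC; apply: ge_ereal_sup => _ [i _ <-].
apply: le_trans (fC i.+1); apply: le_trans (lpnormy_ge_norm _ i).
by rewrite /truncf ltnSn.
Qed.

Lemma lpnormy_truncf_lty f k : lpnorm +oo (truncf k f) < +oo.
Proof.
apply: (@le_lt_trans _ _ (\sum_(0 <= i < k) `|f i|)%R%:E); last exact: ltry.
apply: ge_ereal_sup => _ [i _ <-]; rewrite lee_fin /truncf.
case: ltnP => ik; last by rewrite normr0 sumr_ge0.
by rewrite (bigD1_seq i) ?mem_index_iota ?iota_uniq //= lerDl sumr_ge0.
Qed.

End infinite_exponent.

Section lpnorm_properties.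
Context {p : \bar R}.
Hypothesis p_ge1 : 1 <= p.

Let p_cases : (exists2 r : R, (1 <= r)%R & p = r%:E) \/ p = +oo.
Proof.
move: p_ge1; case: p => [r|_|//]; last by right.
by rewrite lee_fin => r1; left; exists r.
Qed.

Lemma lpnorm_ge_norm f i : (`|f i|)%:E <= lpnorm p f.
Proof.
by case: p_cases => [[r r1 ->]|->]; [exact: lpnormr_ge_norm|exact: lpnormy_ge_norm].
Qed.

Lemma lpnorm_ge0 f : 0 <= lpnorm p f.
Proof. exact: le_trans (lpnorm_ge_norm f 0). Qed.

Lemma le_lpnorm f g : (forall i, `|f i| <= `|g i|)%R -> lpnorm p f <= lpnorm p g.
Proof. by case: p_cases => [[r r1 ->]|->]; [exact: le_lpnormr|exact: le_lpnormy]. Qed.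

Lemma lpnormD f g : lpnorm p (f \+ g)%R <= lpnorm p f + lpnorm p g.
Proof. by case: p_cases => [[r r1 ->]|->]; [exact: lpnormrD|exact: lpnormyD]. Qed.

Lemma lpnormZ c f : lpnorm p (fun i => c * f i)%R <= (`|c|)%:E * lpnorm p f.
Proof. by case: p_cases => [[r r1 ->]|->]; [rewrite lpnormrZ|exact: lpnormyZ]. Qed.

Lemma lpnorm_shift j f : lpnorm p (shiftf j f) <= lpnorm p f.
Proof.
by case: p_cases => [[r r1 ->]|->]; [rewrite lpnormr_shift|exact: lpnormy_shift].
Qed.

Lemma lpnorm_le_truncf f (C : R) :
  (forall k, lpnorm p (truncf k f) <= C%:E) -> lpnorm p f <= C%:E.
Proof.
by case: p_cases => [[r r1 ->]|->]; [exact: lpnormr_le_truncf|exact: lpnormy_le_truncf].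
Qed.

Lemma lpnorm_finite_support f k : (forall i, (k <= i)%N -> f i = 0%R) ->
  lpnorm p f \is a fin_num.
Proof.
move=> fk; have -> : f = truncf k f.
  by apply/funext => i; rewrite /truncf; case: ltnP => // /fk.
rewrite ge0_fin_numE ?lpnorm_ge0 //.
by case: p_cases => [[r r1 ->]|->]; [exact: lpnormr_truncf_lty|exact: lpnormy_truncf_lty].
Qed.

Lemma lpnorm_cst0 : lpnorm p (fun=> 0%R) = 0.
Proof.
apply/eqP; rewrite eq_le lpnorm_ge0 andbT.
have := lpnormZ 0 (fun=> 0%R).
by rewrite normr0 mul0e; under eq_fun do rewrite mul0r.
Qed.

Lemma lpnorm_sum (I : Type) (s : seq I) (F : I -> nat -> R) :
  lpnorm p (fun i => \sum_(j <- s) F j i)%R <= \sum_(j <- s) lpnorm p (F j).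
Proof.
elim: s => [|a s IH].
  by rewrite big_nil; under eq_fun do rewrite big_nil; rewrite lpnorm_cst0.
rewrite big_cons; under eq_fun do rewrite big_cons.
exact: le_trans (lpnormD _ _) (leeD (lexx _) IH).
Qed.

Lemma lpnorm_truncf_le f k (e : R) : (0 <= e)%R ->
    (forall i, (i < k)%N -> `|f i| <= e)%R ->
  lpnorm p (truncf k f) <= e%:E * lpnorm p (truncf k (fun=> 1%R)).
Proof.
move=> e0 fe; rewrite -(ger0_norm e0).
apply: le_trans (lpnormZ _ _); apply: le_lpnorm => i.
rewrite /truncf; case: ltnP => ik; last by rewrite normr0.
by rewrite mulr1 (ger0_norm e0) fe.
Qed.

End lpnorm_properties.
End lp_sequences.

Lemma cvgn_dominated_increments {R : realType} (u S : nat -> R) :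
    nondecreasing_seq S -> has_ubound (range S) ->
    (forall n m, (n <= m)%N -> `|u m - u n| <= S m - S n) ->
  cvgn u.
Proof.
move=> S_nd [B SB] du.
(* u + S is nondecreasing and bounded, and u = (u + S) - S. *)
have uS_nd : nondecreasing_seq (fun m => u m + S m).
  move=> n m nm; have := du n m nm.
  have : u n - u m <= `|u m - u n| by rewrite distrC ler_norm.
  lra.
have uS_ub : has_ubound (range (fun m => u m + S m)).
  exists (u 0%N + 2 * B - S 0%N) => _ [m _ <-].
  have := du 0%N m (leq0n m); have := SB (S m) (ex_intro2 _ _ m I erefl).
  have : u m - u 0%N <= `|u m - u 0%N| by rewrite ler_norm.
  lra.
have -> : u = (fun m => u m + S m) - S by apply/funext => m /=; rewrite addrK.
apply: is_cvgB; first exact: nondecreasing_is_cvgn uS_nd uS_ub.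
by apply: nondecreasing_is_cvgn S_nd _; exists B.
Qed.

Section lp_cauchy.
Context {R : realType} {p : \bar R} {X : nat -> nat -> R} {S : nat -> R}.
Hypothesis p_ge1 : (1 <= p)%E.
Hypothesis S_nd : nondecreasing_seq S.
Hypothesis S_ub : has_ubound (range S).
Hypothesis lpnorm_step :
  forall n, (lpnorm p (X n.+1 \- X n)%R <= (S n.+1 - S n)%:E)%E.

Local Notation y := (fun i => limn (X ^~ i)).

Lemma lpnorm_increment_le n m : (n <= m)%N ->
  (lpnorm p (X m \- X n)%R <= (S m - S n)%:E)%E.
Proof.
move=> /subnKC <-; elim: (m - n)%N => [|k IH].
  rewrite addn0 subrr (_ : X n \- X n = fun=> 0); first by rewrite lpnorm_cst0.
  by apply/funext => i /=; rewrite subrr.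
have -> : X (n + k.+1) \- X n =
    (X (n + k).+1 \- X (n + k)) \+ (X (n + k) \- X n) :> (nat -> R).
  by apply/funext => i /=; rewrite addnS addrA subrK.
apply: le_trans (lpnormD p_ge1 _ _) _.
apply: le_trans (leeD (lpnorm_step _) IH) _.
by rewrite addnS -EFinD lee_fin addrA subrK.
Qed.

Let S_cvg : cvgn S. Proof. exact: nondecreasing_is_cvgn. Qed.

Lemma cvgn_coord i : X ^~ i @ \oo --> y i.
Proof.
apply: (@cvgn_dominated_increments _ (X ^~ i) S S_nd S_ub) => n m nm.
rewrite -lee_fin.
exact: le_trans (lpnorm_ge_norm p_ge1 (X m \- X n) i) (lpnorm_increment_le _ _ nm).
Qed.

Lemma lpnorm_sub_limn_le n : (lpnorm p (X n \- y)%R <= (limn S - S n)%:E)%E.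
Proof.
(* Fatou: on the first k coordinates, X m is eventually uniformly close to y. *)
apply: (lpnorm_le_truncf p_ge1) => k.
have [K K0 K_def] : exists2 K, 0 <= K & lpnorm p (truncf k (fun=> 1)) = K%:E.
  have : lpnorm p (truncf k (fun=> 1)) \is a fin_num.
    by apply: (lpnorm_finite_support p_ge1 _ k) => i; rewrite /truncf ltnNge => ->.
  by exists (fine (lpnorm p (truncf k (fun=> 1)))); rewrite ?fine_ge0 ?lpnorm_ge0 ?fineK.
apply/lee_addgt0Pr => e e0; set eps := e / (K + 1).
have eps0 : 0 < eps by rewrite divr_gt0 // ltr_wpDl.
have : \forall m \near \oo, forall i : 'I_k, `|y i - X m i| < eps.
  by apply: filter_forall => i; apply: cvgr_dist_lt eps0; exact: cvgn_coord.
case=> N0 _ near_y; set m := maxn N0 n.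
have nm : (n <= m)%N by rewrite leq_maxr.
have -> : truncf k (X n \- y) = truncf k (X n \- X m) \+ truncf k (X m \- y).
  apply/funext => i; rewrite /truncf /=; case: ifP => _; last by rewrite addr0.
  by rewrite addrA subrK.
have near_n : (lpnorm p (truncf k (X n \- X m))%R <= (limn S - S n)%:E)%E.
  apply: (@le_trans _ _ (lpnorm p (X m \- X n)%R)).
    apply: (le_lpnorm p_ge1) => i; rewrite /truncf /=.
    by case: ifP => _; [rewrite distrC | rewrite normr0].
  apply: le_trans (lpnorm_increment_le _ _ nm) _.
  by rewrite lee_fin lerD2r nondecreasing_cvgn_le.
have near_y_m : (lpnorm p (truncf k (X m \- y))%R <= e%:E)%E.
  apply: le_trans (lpnorm_truncf_le p_ge1 _ _ _ (ltW eps0) _) _.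
    move=> i ik; rewrite distrC ltW //.
    by apply: (near_y m _ (Ordinal ik)); rewrite /= leq_maxl.
  rewrite K_def -EFinM lee_fin /eps mulrAC ler_pdivrMr ?ltr_wpDl //.
  by rewrite ler_wpM2l ?(ltW e0) // lerDl.
by apply: le_trans (lpnormD p_ge1 _ _) _; rewrite EFinD leeD.
Qed.

Lemma lp_cvg_dominated_increments : (lpnorm p (X 0%N) < +oo)%E ->
  exists y, (lpnorm p y < +oo)%E /\ (fun n => lpnorm p (X n \- y)%R) @ \oo --> 0%E.
Proof.
move=> X0_fin; exists y; split.
  have -> : y = (y \- X 0%N) \+ X 0%N by apply/funext => i /=; rewrite subrK.
  apply: le_lt_trans (lpnormD p_ge1 _ _) _; rewrite lte_add_pinfty //.
  apply: (@le_lt_trans _ _ (lpnorm p (X 0%N \- y)%R)).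
    by apply: (le_lpnorm p_ge1) => i; rewrite distrC.
  by apply: le_lt_trans (lpnorm_sub_limn_le 0) _; exact: ltry.
apply: (@squeeze_cvge _ _ _ _ (fun=> 0%E) _ (fun n => (limn S - S n)%:E)).
- by apply: nearW => n; rewrite lpnorm_ge0 ?lpnorm_sub_limn_le.
- exact: cvg_cst.
apply/fine_cvgP; split; first exact: nearW.
by rewrite -(subrr (limn S)); apply: cvgB; [exact: cvg_cst | exact: S_cvg].
Qed.

End lp_cauchy.

Lemma partial_sums_bounded {R : realType} (u : nat -> R) :
    (forall n, 0 <= u n) -> (\sum_(1 <= n <oo) (u n)%:E < +oo)%E ->
  exists B, forall k, \sum_(1 <= n < k) u n <= B.
Proof.
move=> u_ge0 u_fin; have u_fin_num : (\sum_(1 <= n <oo) (u n)%:E)%E \is a fin_num.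
  by rewrite ge0_fin_numE // nneseries_ge0 // => n _ _; rewrite lee_fin.
exists (fine (\sum_(1 <= n <oo) (u n)%:E)%E) => k.
rewrite -lee_fin fineK // -sumEFin.
by apply: nneseries_lim_ge => n _ _; rewrite lee_fin.
Qed.

Lemma discrete_gronwall {R : realType} (e a c : nat -> R) :
    (forall n, 0 <= a n) -> (forall n, 0 <= c n) -> 0 <= e 0%N ->
    (forall n, e n.+1 <= (1 + a n.+1) * e n + c n.+1) ->
  forall n, e n <= (e 0%N + \sum_(1 <= k < n.+1) c k) * expR (\sum_(1 <= k < n.+1) a k).
Proof.
move=> a_ge0 c_ge0 e0_ge0 e_step; elim=> [|n IH].
  by rewrite !big_geq // addr0 expR0 mulr1.
rewrite big_nat_recr //= [X in expR X]big_nat_recr //= expRD addrA.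
set P := e 0%N + _ in IH *; set A := expR _ in IH *.
have P_ge0 : 0 <= P by rewrite addr_ge0 // sumr_ge0.
have A_ge1 : 1 <= A by rewrite -expR0 ler_expR sumr_ge0.
have a_exp : 1 + a n.+1 <= expR (a n.+1) by exact: expR_ge1Dx.
apply: le_trans (e_step n) _.
have -> : (P + c n.+1) * (A * expR (a n.+1)) =
    expR (a n.+1) * (P * A) + c n.+1 * (A * expR (a n.+1)) by ring.
apply: lerD.
  apply: le_trans (ler_wpM2l _ IH) _; first by rewrite addr_ge0.
  by rewrite ler_wpM2r // mulr_ge0 // (le_trans _ A_ge1).
rewrite -[leLHS]mulr1 ler_wpM2l // -[1]mulr1 ler_pM //.
by rewrite (le_trans _ a_exp) // lerDl.
Qed.

Lemma relu_ge0 {R : realType} (t : R) : 0 <= relu t.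
Proof. by rewrite /relu le_max lexx orbT. Qed.

Lemma relu0 {R : realType} : relu (0 : R) = 0.
Proof. by rewrite /relu maxxx. Qed.

Lemma relu_dist_le {R : realType} (u v : R) : 0 <= v -> `|relu u - v| <= `|u - v|.
Proof.
rewrite /relu => v0; case: (leP 0 u) => // u0.
rewrite sub0r normrN ger0_norm // ler0_norm; last by rewrite subr_le0 (le_trans (ltW u0)).
lra.
Qed.

Section convolution.
Context {R : realType}.
Variables (m s : nat) (w : 'I_s.+1 -> R) (f : nat -> R).
Hypothesis f_support : forall i, (m <= i)%N -> f i = 0.

Lemma conv_shiftf :
  Pilot.Defs.conv m w f = (fun i => \sum_(j < s.+1) w j * shiftf j f i).
Proof.
apply/funext => i; rewrite /Pilot.Defs.conv; case: ifPn => ims.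
  rewrite big_mkcond /=; apply: eq_bigr => j _; rewrite /shiftf.
  case: (leqP j i) => //= ji; last by rewrite mulr0.
  by case: ltnP => // mij; rewrite f_support ?mulr0.
rewrite big1 // => j _; rewrite /shiftf; case: leqP => ji; last by rewrite mulr0.
by rewrite f_support ?mulr0 //; move: ims (ltn_ord j); rewrite -leqNgt; lia.
Qed.

Lemma lpnorm_conv_sub_le (p : \bar R) : (1 <= p)%E -> w ord0 = 1 ->
  (lpnorm p (Pilot.Defs.conv m w f \- f)%R <=
   (\sum_(j < s.+1 | (0 < j)%N) `|w j|)%:E * lpnorm p f)%E.
Proof.
move=> p_ge1 w0.
have -> : Pilot.Defs.conv m w f \- f =
    (fun i => \sum_(j < s) w (lift ord0 j) * shiftf j.+1 f i).
  apply/funext => i; rewrite conv_shiftf /= big_ord_recl w0 mul1r.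
  by rewrite /shiftf /= subn0 addrC addKr.
apply: le_trans (lpnorm_sum p_ge1 _ _ (fun j i => w (lift ord0 j) * shiftf j.+1 f i)) _.
have -> : \sum_(j < s.+1 | (0 < j)%N) `|w j| = \sum_(j < s) `|w (lift ord0 j)|.
  by rewrite big_mkcond big_ord_recl /= add0r.
rewrite -sumEFin ge0_sume_distrl //.
apply: lee_sum => j _; apply: le_trans (lpnormZ p_ge1 _ _) _.
by apply: lee_wpmul2l; [rewrite lee_fin | exact: lpnorm_shift].
Qed.

End convolution.

Lemma zext_ge {R : realType} m (v : 'I_m -> R) i : (m <= i)%N -> zext v i = 0.
Proof. by rewrite /zext; case: ltnP => // im; rewrite leqNgt im. Qed.

Section cnn_layers.
Context {R : realType} {p : \bar R} {d : nat} {s : nat -> nat}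
  {w : forall n, 'I_(s n).+1 -> R} {b : forall n, 'I_(width d s n) -> R}
  {x : 'I_d -> R}.
Hypothesis p_ge1 : (1 <= p)%E.
Hypothesis x01 : forall i, 0 <= x i <= 1.
Hypothesis w0 : forall n, (1 <= n)%N -> w n ord0 = 1.

Local Notation X := (cnn w b x).

Lemma cnn_ge n i : (width d s n <= i)%N -> X n i = 0.
Proof. by case: n => [|n] ni; [exact: zext_ge | rewrite /= ifN // -leqNgt]. Qed.

Lemma cnn_ge0 n i : 0 <= X n i.
Proof.
case: n => [|n] /=; last by case: ifP => // _; exact: relu_ge0.
by rewrite /zext; case: ltnP => // id; case/andP: (x01 (Ordinal id)).
Qed.

Lemma cnnS n : X n.+1 =
  (fun i => relu (Pilot.Defs.conv (width d s n) (w n.+1) (X n) i + zext (b n.+1) i)).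
Proof.
apply/funext => i /=; case: ifPn => // ni.
rewrite zext_ge; last by rewrite leqNgt.
by rewrite /Pilot.Defs.conv ifN // addr0 relu0.
Qed.

Lemma lpnorm_cnn_step_le n : (lpnorm p (X n.+1 \- X n)%R <=
  (\sum_(j < (s n.+1).+1 | (0 < j)%N) `|w n.+1 j|)%:E * lpnorm p (X n) +
  lpnorm p (zext (b n.+1)))%E.
Proof.
(* ReLU fixes the nonnegative X n, leaving (conv - id) (X n) + b. *)
set C := Pilot.Defs.conv (width d s n) (w n.+1) (X n).
apply: (@le_trans _ _ (lpnorm p ((C \- X n) \+ zext (b n.+1)))).
  apply: (le_lpnorm p_ge1) => i; rewrite cnnS /= addrAC.
  exact/relu_dist_le/cnn_ge0.
apply: le_trans (lpnormD p_ge1 _ _) (leeD _ (lexx _)).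
by apply: lpnorm_conv_sub_le => //; [exact: cnn_ge | exact: w0].
Qed.

Hypothesis b_summable : (\sum_(1 <= n <oo) lpnorm p (zext (b n)) < +oo)%E.
Hypothesis w_summable :
  (\sum_(1 <= n <oo) (\sum_(j < (s n).+1 | (0 < j)%N) `|w n j|)%:E < +oo)%E.

Let alpha n := \sum_(j < (s n).+1 | (0 < j)%N) `|w n j|.
Let beta n := fine (lpnorm p (zext (b n))).

Let alpha_ge0 n : 0 <= alpha n. Proof. exact: sumr_ge0. Qed.

Let lpnorm_zextE n : lpnorm p (zext (b n)) = (beta n)%:E.
Proof.
rewrite fineK //; apply: (lpnorm_finite_support p_ge1 _ (width d s n)) => i.
exact: zext_ge.
Qed.

Let beta_ge0 n : 0 <= beta n.
Proof. by rewrite -lee_fin -lpnorm_zextE lpnorm_ge0. Qed.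

Let alpha_bounded : exists A, forall k, \sum_(1 <= n < k) alpha n <= A.
Proof. exact: partial_sums_bounded. Qed.

Let beta_bounded : exists B, forall k, \sum_(1 <= n < k) beta n <= B.
Proof.
by apply: partial_sums_bounded => //; under eq_eseriesr do rewrite -lpnorm_zextE.
Qed.

Lemma lpnorm_cnn_fin_num n : lpnorm p (X n) \is a fin_num.
Proof. exact: lpnorm_finite_support p_ge1 _ _ (cnn_ge n). Qed.

Lemma cnn_lpnorm_bounded : exists2 M, 0 <= M & forall n, (lpnorm p (X n) <= M%:E)%E.
Proof.
have [[A A_ub] [B B_ub]] := (alpha_bounded, beta_bounded).
pose e n := fine (lpnorm p (X n)).
have e_ge0 n : 0 <= e n by rewrite fine_ge0 ?lpnorm_ge0.
have e_step n : e n.+1 <= (1 + alpha n.+1) * e n + beta n.+1.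
  have step := lpnorm_cnn_step_le n.
  rewrite -(fineK (lpnorm_cnn_fin_num n)) lpnorm_zextE -EFinM -EFinD in step.
  rewrite -lee_fin /e fineK ?lpnorm_cnn_fin_num //.
  apply: (@le_trans _ _ (lpnorm p (X n \+ (X n.+1 \- X n))%R)).
    by apply: (le_lpnorm p_ge1) => i; rewrite /= subrKC.
  apply: le_trans (lpnormD p_ge1 _ _) _.
  rewrite -[lpnorm p (X n)](fineK (lpnorm_cnn_fin_num n)).
  apply: le_trans (leeD (lexx _) step) _.
  by rewrite -EFinD lee_fin mulrDl mul1r addrA.
exists ((e 0%N + B) * expR A).
  by rewrite mulr_ge0 ?expR_ge0 // addr_ge0 // (le_trans _ (B_ub 0%N)) // big_geq.
move=> n; rewrite -(fineK (lpnorm_cnn_fin_num n)) lee_fin.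
apply: le_trans (discrete_gronwall _ _ _ alpha_ge0 beta_ge0 (e_ge0 0%N) e_step n) _.
by rewrite ler_pM ?addr_ge0 ?sumr_ge0 ?expR_ge0 ?lerD2l ?ler_expR.
Qed.

Lemma cnn_increments_dominated : exists S : nat -> R,
  [/\ nondecreasing_seq S, has_ubound (range S) &
      forall n, (lpnorm p (X n.+1 \- X n)%R <= (S n.+1 - S n)%:E)%E].
Proof.
have [M M0 M_ub] := cnn_lpnorm_bounded.
have [[A A_ub] [B B_ub]] := (alpha_bounded, beta_bounded).
have c_ge0 k : 0 <= alpha k * M + beta k by rewrite addr_ge0 ?mulr_ge0.
exists (fun n => \sum_(1 <= k < n.+1) (alpha k * M + beta k)); split.
- move=> n m nm.
  exact: (@nondecreasing_series _ _ xpredT 1 (fun k _ _ => c_ge0 k) n.+1 m.+1 nm).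
- exists (A * M + B) => _ [n _ <-].
  by rewrite big_split /= -mulr_suml lerD ?ler_wpM2r.
- move=> n; rewrite big_nat_recr //= addrAC subrr add0r EFinD EFinM -lpnorm_zextE.
  apply: le_trans (lpnorm_cnn_step_le n) _; apply: leeD => //.
  by apply: (lee_wpmul2l _ (M_ub n)); rewrite lee_fin alpha_ge0.
Qed.

End cnn_layers.

Theorem theorem6p1 (R : realType) (p : \bar R) (d : nat) (s : nat -> nat)
    (w : forall n, 'I_(s n).+1 -> R) (b : forall n, 'I_(width d s n) -> R) :
  (1 <= p)%E ->
  (\sum_(1 <= n <oo) lpnorm p (zext (b n)) < +oo)%E ->
  (forall n, (1 <= n)%N -> w n ord0 = 1) ->
  (\sum_(1 <= n <oo) (\sum_(j < (s n).+1 | (0 < j)%N) `|w n j|)%:E < +oo)%E ->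
  forall x : 'I_d -> R, (forall i, 0 <= x i <= 1) ->
    exists y : nat -> R, (lpnorm p y < +oo)%E /\
      ((fun n => lpnorm p (cnn w b x n \- y)) @ \oo --> 0%E).
Proof.
move=> p_ge1 b_summable w0 w_summable x x01.
have [S [S_nd S_ub S_step]] :=
  cnn_increments_dominated p_ge1 x01 w0 b_summable w_summable.
apply: (lp_cvg_dominated_increments p_ge1 S_nd S_ub S_step).
by rewrite ltey_eq lpnorm_cnn_fin_num.
Qed.
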